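(* Let $s\in(0,2]$, $P$ a finite set of $n$ points in $(\mathbb{R}^d,\ell_s)$, $\varepsilon>0$, and let $q\in\mathbb{R}^d$ be a query point processed by the reverse nearest neighbor query procedure described in the context, with $y$ the point found at step 1. Let $P'=\bigcup_i P_i$ for $i$ ranging from $\lfloor\log_{1+\varepsilon}\frac{\mathrm{d}(q,y)}{1+\varepsilon}\rfloor+1$ to $\lceil\log_{1+\varepsilon}\frac{\mathrm{d}(q,y)}{\varepsilon}\rceil$, and let $S'$ be the set of points inserted into $S$ at step 2. Then $\mathrm{RNN}_P(q)\cap P'\subseteq S'$ with high probability.
   Context: $\mathrm{d}$ is the $\ell_s$ distance; $\mathrm{d}(x,P)=\min\{\mathrm{d}(x,p):p\in P\setminus\{x\}\}$; $N_Q(x,R)$ is the set of $p\in Q\setminus\{x\}$ with $\mathrm{d}(x,p)\le R$; $\varepsilon\text{-}\mathrm{NN}_P(x)=N_P(x,(1+\varepsilon)\mathrm{d}(x,P))$; $\mathrm{RNN}_P(x)$ is the set of $p\in P\setminus\{x\}$ with $\mathrm{d}(p,x)\le\mathrm{d}(p,P)$; $\varepsilon\text{-}\mathrm{RNN}_P(x)$ is the set of $p\in P\setminus\{x\}$ with $\mathrm{d}(p,x)\le(1+\varepsilon)\mathrm{d}(p,P)$. Preprocessing: compute $\mathrm{d}(p,P)$ for all $p\in P$; bucket $P_i=\{p\in P:(1+\varepsilon)^{i-1}\le\mathrm{d}(p,P)<(1+\varepsilon)^i\}$, $i\in\mathbb{Z}$; on each nonempty $P_i$ build a locality-sensitive hashing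 structure for exhaustive $(1+\varepsilon)^i$-PLEB on $P_i$ (the lifted structure $\mathcal{A}'(P_i,(1+\varepsilon)^i,\varepsilon)$ built from $s$-stable hash functions) with $\lceil c\ln n\rceil$ independent repetitions, $c=3/\ln\frac52$, so that for each query it returns $N_{P_i}(q,(1+\varepsilon)^i)$ with probability at least $1-1/n^2$; for each $y\in P$ store the array $P_y=\varepsilon\text{-}\mathrm{RNN}_P(y)\cup\{y\}$ sorted by $\mathrm{d}(\cdot,P)$; build an $\varepsilon$-approximate nearest neighbor structure on $P$ (Har-Peled's tree of LSH structures). Query: (1) find $y\in P$ with the $\varepsilon$-NN structure (with probability at least $1-1/n$, $y\in\varepsilon\text{-}\mathrm{NN}_P(q)$); (2) for each $i$ from $\lfloor\log_{1+\varepsilon}\frac{\mathrm{d}(q,y)}{1+\varepsilon}\rfloor+1$ to $\lceil\log_{1+\varepsilon}\frac{\mathrm{d}(q,y)}{\varepsilon}\rceil$ with $P_i\neq\emptyset$, run the exhaustive $(1+\varepsilon)^i$-PLEB query on $P_i$ and put the outputs into $S$; (3) add to $S$ the points $p\in P_y$ with $\mathrm{d}(p,P)\ge\mathrm{d}(q,y)/\varepsilon$; (4) remove from $S$ the points $p$ with $\mathrm{d}(p,q)>\mathrm{d}(p,P)$; return $S$. ''High probability'' means probability at least $1-1/n$. *)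

From HB Require Import structures.
From mathcomp Require Import all_boot all_order all_algebra.
From mathcomp Require Import all_classical all_reals all_analysis.
From mathcomp Require Import finmap.
Set Implicit Arguments. Unset Strict Implicit. Unset Printing Implicit Defensive.
Import Order.TTheory GRing.Theory Num.Theory.
Local Open Scope classical_set_scope.
Local Open Scope ring_scope.

Section Defs.
Variables (R : realType) (dim : nat).
Local Notation pt := 'rV[R]_dim.

Definition ls_dist (s : R) (x y : pt) : R :=
  (\sum_(k < dim) `|x ord0 k - y ord0 k| `^ s) `^ s^-1.

Definition distP (s : R) (P : {fset pt}) (x : pt) : R :=
  inf [set ls_dist s x p | p in [set p | (p \in P)%fset /\ p != x]].

Definition ballN (s : R) (Q : set pt) (x : pt) (r : R) : set pt :=
  [set p | Q p /\ p != x /\ ls_dist s x p <= r].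

Definition RNN (s : R) (P : {fset pt}) (x : pt) : set pt :=
  [set p | (p \in P)%fset /\ p != x /\ ls_dist s p x <= distP s P p].

Definition bucket (s eps : R) (P : {fset pt}) (i : int) : set pt :=
  [set p | (p \in P)%fset /\
     (1 + eps) ^ (i - 1) <= distP s P p /\ distP s P p < (1 + eps) ^ i].

Definition logb (b x : R) : R := ln x / ln b.

Definition idx_lo (s eps : R) (q y : pt) : int :=
  (Num.floor (logb (1 + eps) (ls_dist s q y / (1 + eps))) + 1)%R.
Definition idx_hi (s eps : R) (q y : pt) : int :=
  Num.ceil (logb (1 + eps) (ls_dist s q y / eps)).

Definition in_range (s eps : R) (q y : pt) (i : int) : Prop :=
  (idx_lo s eps q y <= i)%R /\ (i <= idx_hi s eps q y)%R.

Definition Pprime (s eps : R) (P : {fset pt}) (q y : pt) : set pt :=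
  [set p | exists i, in_range s eps q y i /\ bucket s eps P i p].

(* S' = union of the outputs of the PLEB queries on nonempty buckets in range *)
Definition Sprime (s eps : R) (P : {fset pt}) (q y : pt)
    (out : int -> set pt) : set pt :=
  [set p | exists i, in_range s eps q y i /\ bucket s eps P i !=set0 /\ out i p].

End Defs.

(* A point p of RNN_P(q) lying in the bucket P_i satisfies
   d(p,q) <= d(p,P) < (1+eps)^i, so p belongs to N_{P_i}(q, (1+eps)^i), which is
   exactly what the PLEB structure on P_i returns whenever it succeeds.  The
   buckets partition P, so at most n PLEB queries matter; each fails with
   probability at most 1/n^2 and the union bound gives failure probability at
   most n / n^2 = 1/n. *)
From HB Require Import structures.
From mathcomp Require Import all_boot all_order all_algebra.
From mathcomp Require Import all_classical all_reals all_analysis.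
From mathcomp Require Import finmap.
Set Implicit Arguments. Unset Strict Implicit. Unset Printing Implicit Defensive.
Import Order.TTheory GRing.Theory Num.Theory.
Local Open Scope classical_set_scope.
Local Open Scope ring_scope.

Section Buckets.
Variables (R : realType) (dim : nat) (s eps : R) (P : {fset 'rV[R]_dim}).
Hypothesis eps_ge0 : 0 <= eps.

Lemma ls_distC (x y : 'rV[R]_dim) : ls_dist s x y = ls_dist s y x.
Proof.
by rewrite /ls_dist; congr (_ `^ _); apply: eq_bigr => k _; rewrite distrC.
Qed.

Lemma bucket_index_le i j p :
  bucket s eps P i p -> bucket s eps P j p -> (i <= j)%R.
Proof.
move=> [_ [lo_i _]] [_ [_ hi_j]]; rewrite leNgt; apply/negP => ji.
have base_ge1 : 1 <= 1 + eps by rewrite lerDl.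
have : (1 + eps) ^ j <= (1 + eps) ^ (i - 1).
  by apply: ler_weXz2l => //; rewrite -ltzD1 subrK.
by move/le_trans/(_ lo_i)/le_lt_trans/(_ hi_j); rewrite ltxx.
Qed.

Lemma bucket_index_unique i j p :
  bucket s eps P i p -> bucket s eps P j p -> i = j.
Proof.
by move=> bi bj; apply/eqP; rewrite eq_le !(bucket_index_le bi bj, bucket_index_le bj bi).
Qed.

Lemma RNN_bucket_ballN q i p : RNN s P q p -> bucket s eps P i p ->
  ballN s (bucket s eps P i) q ((1 + eps) ^ i) p.
Proof.
move=> [_ [pq rnn]] bi; do 2!split=> //.
rewrite ls_distC (le_trans rnn) //; by case: bi => _ [_ /ltW].
Qed.

Lemma RNN_Pprime_sub_Sprime q y (out : int -> set 'rV[R]_dim) :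
  (forall i, bucket s eps P i !=set0 ->
     out i = ballN s (bucket s eps P i) q ((1 + eps) ^ i)) ->
  RNN s P q `&` Pprime s eps P q y `<=` Sprime s eps P q y out.
Proof.
move=> out_ball p [rnn [i [range bi]]].
exists i; split=> //; split; first by exists p.
by rewrite out_ball; [apply: RNN_bucket_ballN | exists p].
Qed.

End Buckets.

Section UnionBound.
Local Open Scope ereal_scope.
Variables (d : measure_display) (Omega : measurableType d) (R : realType)
  (Pr : probability Omega R).

Lemma probability_ge_setC (A : set Omega) (c : R) : measurable A ->
  ((1 - c)%:E <= Pr A) = (Pr (~` A) <= c%:E).
Proof.
move=> mA; rewrite probability_setC // -(fineK (fin_num_measure Pr _ mA)).
by rewrite -EFinB !lee_fin lerBlDr addrC -lerBlDr.
Qed.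

Lemma probability_bigsetI_ge (I : Type) (r : seq I) (E : I -> set Omega) (c : R) :
  (forall i, measurable (E i)) -> (forall i, (1 - c)%:E <= Pr (E i)) ->
  (1 - (size r)%:R * c)%:E <= Pr (\big[setI/setT]_(i <- r) E i).
Proof.
move=> mE PrE; rewrite probability_ge_setC; last exact: bigsetI_measurable.
elim: r => [|a r IHr]; first by rewrite big_nil setCT measure0 mul0r.
rewrite big_cons setCI (le_trans (measureU2 _ _ _)) //;
  [exact: measurableC | exact/measurableC/bigsetI_measurable |].
by rewrite /= -nat1r mulrDl mul1r EFinD leeD // -probability_ge_setC.
Qed.

End UnionBound.

Section PointEvents.
Variables (R : realType) (dim : nat) (s eps : R) (P : {fset 'rV[R]_dim})
  (q : 'rV[R]_dim) (d : measure_display) (Omega : measurableType d)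
  (Pr : probability Omega R) (out : int -> Omega -> set 'rV[R]_dim) (c : R).
Hypotheses (eps_ge0 : 0 <= eps) (c_ge0 : 0 <= c).
Hypothesis PLEB_correct : forall i : int, bucket s eps P i !=set0 ->
  exists A, [/\ measurable A,
    A `<=` [set w | out i w = ballN s (bucket s eps P i) q ((1 + eps) ^ i)] &
    ((1 - c)%:E <= Pr A)%E].

Lemma bucket_event_of_point p : exists A, [/\ measurable A,
  A `<=` [set w | forall i, bucket s eps P i p ->
                  out i w = ballN s (bucket s eps P i) q ((1 + eps) ^ i)] &
  ((1 - c)%:E <= Pr A)%E].
Proof.
have [[i bi]|no_bucket] := pselect (exists i, bucket s eps P i p); last first.
  exists setT; split=> //; last by rewrite probability_setT lee_fin lerBlDr lerDl.
  by move=> w _ i bi; case: no_bucket; exists i.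
have [A [mA A_out PrA]] := PLEB_correct (ex_intro _ p bi).
exists A; split=> // w Aw j bj.
by rewrite -(bucket_index_unique eps_ge0 bi bj); apply: A_out.
Qed.

End PointEvents.

Theorem lemma6 (R : realType) (dim : nat) (s eps : R)
  (P : {fset 'rV[R]_dim}) (n : nat) (q : 'rV[R]_dim)
  (dT : measure_display) (Omega : measurableType dT) (Pr : probability Omega R)
  (y : Omega -> 'rV[R]_dim)
  (out : int -> Omega -> set 'rV[R]_dim) :
  0 < s -> s <= 2 -> 0 < eps ->
  #|` P| = n -> (2 <= n)%N ->
  (forall w, (y w \in P)%fset) ->
  (forall i : int, bucket s eps P i !=set0 ->
     exists A, [/\ measurable A,
       A `<=` [set w | out i w = ballN s (bucket s eps P i) q ((1 + eps) ^ i)] &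
       ((1 - (n%:R ^+ 2)^-1)%:E <= Pr A)%E]) ->
  exists A, [/\ measurable A,
    A `<=` [set w | RNN s P q `&` Pprime s eps P q (y w)
                     `<=` Sprime s eps P q (y w) (fun i => out i w)] &
    ((1 - n%:R^-1)%:E <= Pr A)%E].
Proof.
move=> _ _ eps_gt0 card_P n_ge2 _ PLEB_correct.
have n_gt0 : 0 < n%:R :> R by rewrite ltr0n ltnW.
have fail_ge0 : 0 <= (n%:R ^+ 2)^-1 :> R by rewrite invr_ge0 exprn_ge0 // ltW.
have [E E_spec] :=
  choice (bucket_event_of_point (ltW eps_gt0) fail_ge0 PLEB_correct).
exists (\big[setI/setT]_(p <- P) E p); split.
- by apply: bigsetI_measurable => p _; case: (E_spec p).
- move=> w Ew; apply: RNN_Pprime_sub_Sprime => i [p bi].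
  have [_ E_out _] := E_spec p; apply: (E_out w _ i bi).
  by rewrite -bigcap_seq in Ew; apply: Ew; case: bi.
- have -> : n%:R^-1 = (size P)%:R * (n%:R ^+ 2)^-1 :> R.
    have size_P : size P = n := card_P.
    by rewrite size_P expr2 invfM mulrA mulfV ?mul1r // gt_eqF.
  by apply: probability_bigsetI_ge => p; case: (E_spec p).
Qed.
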